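(* For all integers $n\ge0$, $k\ge1$ and all $0\le\beta\le\alpha$, $$\sum_{i=1}^{k}F_{ni}(\alpha,\beta)=\int_\beta^\alpha\!\!\int_0^\beta\bar\lambda\sum_{i=1}^{k}F_{(n-1)i}(\eta,\sigma)\,d\sigma\,d\eta+4\int_\beta^\alpha\!\!\int_0^\beta\frac{\eta\sigma}{(\eta^2-\sigma^2)^2}F_{n(k-1)}(\eta,\sigma)\,d\sigma\,d\eta.$$
   Context: Let $\bar\lambda\ge0$. For integers $n,k\ge0$ and $0\le\beta<\alpha$, $F_{nk}(\alpha,\beta)=\frac{\bar\lambda^{n+1}\alpha^n\beta^n}{n!(n+1)!}(\alpha-\beta)\frac{\log^k\left(\frac{\alpha+\beta}{\alpha-\beta}\right)}{k!}$, extended continuously by $0$ on the diagonal $\alpha=\beta$; $F_{nk}\equiv0$ if $n<0$ or $k<0$. *)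

From Stdlib Require Import Reals ZArith.
Open Scope R_scope.

(* F_{nk}(alpha,beta), with integer indices n k; identically 0 if n<0 or k<0,
   and 0 unless beta < alpha (continuous extension by 0 on the diagonal;
   only 0 <= beta <= alpha is ever used). *)
Definition F (lam : R) (n k : Z) (a b : R) : R :=
  if orb (Z.ltb n 0) (Z.ltb k 0) then 0 else
  if Rlt_dec b a then
    let nn := Z.to_nat n in let kk := Z.to_nat k in
    lam ^ (S nn) * a ^ nn * b ^ nn / (INR (fact nn) * INR (fact (S nn)))
    * (a - b) * (ln ((a + b) / (a - b))) ^ kk / INR (fact kk)
  else 0.

(* \sum_{i=1}^{k} F_{n i}(a,b)  (k >= 1 assumed where used) *)
Definition sumF (lam : R) (n : Z) (k : nat) (a b : R) : R :=
  sum_f_R0 (fun j => F lam n (Z.of_nat (S j)) a b) (Nat.pred k).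

Definition RInt_eq (f : R -> R) (a b v : R) : Prop :=
  exists pr : Riemann_integrable f a b, RiemannInt pr = v.

Definition improper_lower (f : R -> R) (a b v : R) : Prop :=
  (a = b /\ v = 0) \/
  (a < b /\ forall eps, 0 < eps -> exists delta, 0 < delta /\
     forall c, a < c < a + delta -> c <= b ->
       exists w, RInt_eq f c b w /\ Rabs (w - v) < eps).

(* \int_beta^alpha \int_0^beta h(eta,sigma) dsigma deta = v, the inner integral
   being a proper Riemann integral for each eta in (beta, alpha], the outer one
   an (at most) improper integral at eta = beta. *)
Definition double_int (h : R -> R -> R) (beta alpha v : R) : Prop :=
  exists G : R -> R,
    (forall eta, beta < eta <= alpha -> RInt_eq (fun s => h eta s) 0 beta (G eta))
    /\ improper_lower G beta alpha v.

(* Write U(a,b) = sum_{i=1}^k F_{ni}(a,b).  Termwise, the mixed derivative d_b d_a F_{n,i}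
   equals lam F_{n-1,i} + 4ab/(a^2-b^2)^2 (F_{n,i-1} - F_{n,i-2}); summed over i this
   telescopes to the two integrands.  As d_a U(eta,0) = 0, integrating in sigma over [0,beta]
   returns d_a U(eta,beta), and integrating that in eta over [beta,alpha] returns
   U(alpha,beta) - U(beta,beta) = U(alpha,beta).
   The analytic difficulty sits on the diagonal, where F vanishes continuously because
   (1-t) ln^j((1+t)/(1-t)) -> 0 as t -> 1.  By the homogeneity F(a,b) = a^(2n+1) F(1,b/a),
   the first inner integral is continuous up to eta = beta, so its outer integral is proper;
   the improper outer integral of the second kernel is then read off from the identity. *)

From Stdlib Require Import Reals ZArith Lra Lia.
From Coquelicot Require Import Coquelicot.
Open Scope R_scope.

Lemma is_derive_Rplus (f h : R -> R) x df dh :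
  is_derive f x df -> is_derive h x dh -> is_derive (fun t => f t + h t) x (df + dh).
Proof. exact (is_derive_plus f h x df dh). Qed.

Lemma is_derive_Rmult (f h : R -> R) x df dh :
  is_derive f x df -> is_derive h x dh ->
  is_derive (fun t => f t * h t) x (df * h x + f x * dh).
Proof. intros Hf Hh. apply (is_derive_mult f h x df dh Hf Hh). exact Rmult_comm. Qed.

Lemma is_derive_replace (f : R -> R) (x l l' : R) : is_derive f x l -> l = l' -> is_derive f x l'.
Proof. now intros H <-. Qed.

Lemma is_derive_ext_gt (f h : R -> R) (b x l : R) :
  b < x -> (forall y, b < y -> f y = h y) -> is_derive f x l -> is_derive h x l.
Proof.
intros Hx Hfh. apply is_derive_ext_loc.
apply (filter_imp (fun y => b < y)); [exact Hfh | apply open_gt; exact Hx].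
Qed.

Lemma is_derive_sum_f_R0 (f : nat -> R -> R) (df : nat -> R) (x : R) N :
  (forall i, (i <= N)%nat -> is_derive (f i) x (df i)) ->
  is_derive (fun y => sum_f_R0 (fun i => f i y) N) x (sum_f_R0 df N).
Proof.
intros H. induction N as [|N IH]; cbn [sum_f_R0].
- apply H; lia.
- apply is_derive_Rplus; auto.
Qed.

Lemma continuous_Rplus (f h : R -> R) (x : R) :
  continuous f x -> continuous h x -> continuous (fun y => f y + h y) x.
Proof. exact (continuous_plus f h x). Qed.

Lemma continuous_Rmult (f h : R -> R) (x : R) :
  continuous f x -> continuous h x -> continuous (fun y => f y * h y) x.
Proof. exact (continuous_mult f h x). Qed.

Lemma continuous_Rminus (f h : R -> R) (x : R) :
  continuous f x -> continuous h x -> continuous (fun y => f y - h y) x.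
Proof. exact (continuous_minus f h x). Qed.

Lemma continuous_Rcomp (f h : R -> R) (x : R) :
  continuous f x -> continuous h (f x) -> continuous (fun y => h (f y)) x.
Proof. exact (continuous_comp f h x). Qed.

Lemma continuous_of_ex_derive (f : R -> R) (x : R) : ex_derive f x -> continuous f x.
Proof. exact (ex_derive_continuous f x). Qed.

Lemma continuous_sum_f_R0 (f : nat -> R -> R) (x : R) N :
  (forall i, continuous (f i) x) -> continuous (fun y => sum_f_R0 (fun i => f i y) N) x.
Proof.
intros H. induction N as [|N IH]; cbn [sum_f_R0]; [apply H | now apply continuous_Rplus].
Qed.

Lemma continuous_of_sq_le (f : R -> R) (x M d : R) : 0 < d -> f x = 0 ->
  (forall y, Rabs (y - x) < d -> f y ^ 2 <= M * Rabs (y - x)) -> continuous f x.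
Proof.
intros Hd Hx Hsq. apply (proj2 (filterlim_locally f (f x))). intros eps.
assert (Heps := cond_pos eps).
set (M' := Rabs M + 1).
assert (HM' : 0 < M') by (unfold M'; assert (H := Rabs_pos M); lra).
assert (Hdelta : 0 < Rmin d (eps ^ 2 / M'))
  by (apply Rmin_glb_lt; [lra | apply Rdiv_lt_0_compat; nra]).
exists (mkposreal _ Hdelta). intros y Hy. change (Rabs (f y - f x) < eps).
change (Rabs (y - x) < Rmin d (eps ^ 2 / M')) in Hy.
assert (Hd1 := Rmin_l d (eps ^ 2 / M')). assert (Hd2 := Rmin_r d (eps ^ 2 / M')).
assert (Hyx : f y ^ 2 < eps ^ 2).
{ apply Rle_lt_trans with (M' * Rabs (y - x)).
  - apply Rle_trans with (M * Rabs (y - x)); [apply Hsq; lra|].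
    apply Rmult_le_compat_r; [apply Rabs_pos|]. unfold M'. assert (H := Rle_abs M). lra.
  - apply Rlt_le_trans with (M' * (eps ^ 2 / M')); [apply Rmult_lt_compat_l; lra|].
    right. field. lra. }
rewrite Hx, Rminus_0_r. apply Rabs_def1; nra.
Qed.

Lemma is_RInt_Rext (f h : R -> R) (a b l : R) :
  (forall x, Rmin a b < x < Rmax a b -> f x = h x) -> is_RInt f a b l -> is_RInt h a b l.
Proof. exact (is_RInt_ext f h a b l). Qed.

Lemma is_RInt_Rscal (f : R -> R) (a b c l : R) :
  is_RInt f a b l -> is_RInt (fun x => c * f x) a b (c * l).
Proof. exact (is_RInt_scal f a b c l). Qed.

Lemma is_RInt_Rplus (f h : R -> R) (a b l m : R) :
  is_RInt f a b l -> is_RInt h a b m -> is_RInt (fun x => f x + h x) a b (l + m).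
Proof. exact (is_RInt_plus f h a b l m). Qed.

Lemma is_RInt_Rminus (f h : R -> R) (a b l m : R) :
  is_RInt f a b l -> is_RInt h a b m -> is_RInt (fun x => f x - h x) a b (l - m).
Proof. exact (is_RInt_minus f h a b l m). Qed.

Lemma is_RInt_Rderive (f df : R -> R) (a b : R) :
  (forall x, Rmin a b <= x <= Rmax a b -> is_derive f x (df x)) ->
  (forall x, Rmin a b <= x <= Rmax a b -> continuous df x) ->
  is_RInt df a b (f b - f a).
Proof. exact (is_RInt_derive f df a b). Qed.

Section ContinuousOnRay.
Variables (f : R -> R) (lo : R).
Hypothesis f_cont : forall t, lo < t -> continuous f t.

Lemma ex_RInt_continuous_gt a b : lo < a -> lo < b -> ex_RInt f a b.
Proof.
intros Ha Hb. apply (ex_RInt_continuous (V := R_CompleteNormedModule)). intros z Hz. apply f_cont.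
assert (Rmin a b > lo) by (apply Rmin_glb_lt; lra). lra.
Qed.

Lemma continuous_RInt_upper a x : lo < a -> lo < x -> continuous (fun y => RInt f a y) x.
Proof.
intros Ha Hx. apply (continuous_RInt_1 f a x).
apply (filter_imp (fun y => lo < y)); [|now apply open_gt].
intros y Hy. apply (RInt_correct (V := R_CompleteNormedModule)). now apply ex_RInt_continuous_gt.
Qed.

Lemma continuous_RInt_lower b x : lo < b -> lo < x -> continuous (fun y => RInt f y b) x.
Proof.
intros Hb Hx.
apply (continuous_ext_loc _ (fun y => opp (RInt f b y))).
{ apply (filter_imp (fun y => lo < y)); [|now apply open_gt].
  intros y Hy. apply opp_RInt_swap. now apply ex_RInt_continuous_gt. }
apply (continuous_opp (fun y => RInt f b y)). now apply continuous_RInt_upper.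
Qed.

End ContinuousOnRay.

Lemma RInt_eq_of_is_RInt (f : R -> R) a b l : is_RInt f a b l -> RInt_eq f a b l.
Proof.
intros H. assert (Hex : ex_RInt f a b) by (exists l; exact H).
exists (ex_RInt_Reals_0 _ _ _ Hex). rewrite <- RInt_Reals. exact (is_RInt_unique f a b l H).
Qed.

Lemma improper_lower_of_continuous (f W : R -> R) a b : a < b ->
  (forall c, a < c <= b -> RInt_eq f c b (W c)) -> continuous W a ->
  improper_lower f a b (W a).
Proof.
intros Hab HW Hcont. right. split; [exact Hab|]. intros eps Heps.
destruct (proj1 (filterlim_locally W (W a)) Hcont (mkposreal eps Heps)) as [delta Hdelta].
exists delta. split; [apply cond_pos|]. intros c Hc Hcb.
exists (W c). split; [apply HW; lra|]. apply (Hdelta c).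
change (Rabs (c - a) < delta). rewrite Rabs_pos_eq; lra.
Qed.

Lemma double_int_degenerate (h : R -> R -> R) beta alpha : beta <= alpha ->
  beta = alpha \/ beta = 0 -> double_int h beta alpha 0.
Proof.
intros Hba Hb. exists (fun _ => 0).
destruct (Req_dec beta alpha) as [<- | Hne]; [split; [intros; lra | left; auto]|].
destruct Hb as [Hb | ->]; [contradiction|]. split.
- intros eta _. apply RInt_eq_of_is_RInt, (is_RInt_point (V := R_NormedModule)).
- apply (improper_lower_of_continuous _ (fun _ => 0)); [lra | | apply continuous_const].
  intros c _. apply RInt_eq_of_is_RInt.
  assert (H := is_RInt_const c alpha 0).
  change (is_RInt (fun _ => 0) c alpha ((alpha - c) * 0)) in H.
  now rewrite Rmult_0_r in H.
Qed.

Lemma sum_f_R0_telescope (A u : nat -> R) c d N :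
  sum_f_R0 (fun i => c * A i + d * (u (S i) - u i)) N
  = c * sum_f_R0 A N + d * (u (S N) - u O).
Proof. induction N as [|N IH]; cbn [sum_f_R0]; [ring | rewrite IH; ring]. Qed.

Lemma pow_le_fact_mul_exp j y : 0 <= y -> y ^ j <= INR (fact j) * exp y.
Proof.
intros Hy. assert (Hf := INR_fact_lt_0 j).
apply (Rmult_le_reg_r (/ INR (fact j))); [now apply Rinv_0_lt_compat|].
replace (INR (fact j) * exp y * / INR (fact j)) with (exp y) by (field; lra).
eapply Rle_trans; [|apply (exp_ge_taylor y j Hy)].
destruct j as [|j]; cbn [sum_f_R0]; [simpl; lra|].
assert (0 <= sum_f_R0 (fun i => y ^ i / INR (fact i)) j); [|lra].
apply cond_pos_sum. intros i. apply Rmult_le_pos; [now apply pow_le|].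
apply Rlt_le, Rinv_0_lt_compat, INR_fact_lt_0.
Qed.

(** * Closed form and homogeneity of F *)

Definition pow_fact (j : nat) (y : R) : R := y ^ j / INR (fact j).

Definition pow_fact_pred (j : nat) (y : R) : R :=
  match j with O => 0 | S j' => pow_fact j' y end.

Definition log_ratio (a b : R) : R := ln ((a + b) / (a - b)).

Lemma log_ratio_0_r a : 0 < a -> log_ratio a 0 = 0.
Proof.
intros Ha. unfold log_ratio. replace ((a + 0) / (a - 0)) with 1 by (field; lra). apply ln_1.
Qed.

Definition Fcoef (lam : R) (m : nat) : R :=
  lam ^ S m / (INR (fact m) * INR (fact (S m))).

Lemma F_of_nat lam m j a b : b < a ->
  F lam (Z.of_nat m) (Z.of_nat j) a b
  = Fcoef lam m * a ^ m * b ^ m * (a - b) * pow_fact j (log_ratio a b).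
Proof.
intros Hba. unfold F.
replace (Z.of_nat m <? 0)%Z with false by (symmetry; apply Z.ltb_ge; lia).
replace (Z.of_nat j <? 0)%Z with false by (symmetry; apply Z.ltb_ge; lia).
simpl orb. destruct (Rlt_dec b a); [|lra].
rewrite !Nat2Z.id. unfold Fcoef, pow_fact, log_ratio.
field. repeat split; apply INR_fact_neq_0.
Qed.

Lemma F_not_lt lam p j a b : ~ b < a -> F lam p j a b = 0.
Proof.
intros Hba. unfold F. destruct (_ || _)%bool; [reflexivity|].
destruct (Rlt_dec b a); tauto.
Qed.

Lemma F_neg_l lam p j a b : (p < 0)%Z -> F lam p j a b = 0.
Proof. intros Hp. unfold F. now replace (p <? 0)%Z with true by (symmetry; lia). Qed.

Lemma F_neg_r lam p j a b : (j < 0)%Z -> F lam p j a b = 0.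
Proof.
intros Hj. unfold F. replace (j <? 0)%Z with true by (symmetry; lia).
now rewrite Bool.orb_true_r.
Qed.

Lemma F_scale lam p j a b : 0 < a ->
  F lam p j a b = a ^ (2 * Z.to_nat p + 1) * F lam p j 1 (b / a).
Proof.
intros Ha. set (t := b / a).
assert (Hb : b = a * t) by (unfold t; field; lra). clearbody t. subst b.
unfold F. destruct (_ || _)%bool; [ring|].
destruct (Rlt_dec (a * t) a); destruct (Rlt_dec t 1); try ring; try (exfalso; nra).
replace ((a + a * t) / (a - a * t)) with ((1 + t) / (1 - t)) by (field; split; nra).
rewrite Rpow_mult_distr, pow_add, Nat.mul_comm, pow_mult.
rewrite pow1. simpl pow. field. repeat split; apply INR_fact_neq_0.
Qed.

Lemma sumF_scale lam p k a b : 0 < a ->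
  sumF lam p k a b = a ^ (2 * Z.to_nat p + 1) * sumF lam p k 1 (b / a).
Proof.
intros Ha. unfold sumF. rewrite scal_sum. apply sum_eq. intros i _.
rewrite F_scale by exact Ha. ring.
Qed.

Lemma sumF_diag lam p k a : sumF lam p k a a = 0.
Proof.
unfold sumF. induction (pred k) as [|N IH]; cbn [sum_f_R0]; rewrite ?IH, F_not_lt by lra; ring.
Qed.

Lemma sumF_0_r lam n k a : 0 < a -> sumF lam (Z.of_nat n) k a 0 = 0.
Proof.
intros Ha.
unfold sumF. induction (pred k) as [|N IH]; cbn [sum_f_R0];
  rewrite ?IH, F_of_nat, log_ratio_0_r by lra;
  unfold pow_fact; simpl pow; unfold Rdiv; ring.
Qed.

Lemma is_derive_pow_fact j y : is_derive (pow_fact j) y (pow_fact_pred j y).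
Proof.
unfold pow_fact. auto_derive; [exact I|].
destruct j as [|j]; simpl pow_fact_pred; [simpl; ring|].
unfold pow_fact. change (fact (S j)) with (S j * fact j)%nat.
rewrite mult_INR. simpl pred.
field. split; [apply INR_fact_neq_0 | apply not_0_INR; lia].
Qed.

Lemma is_derive_log_ratio_l a b : 0 <= b < a ->
  is_derive (fun a => log_ratio a b) a (-2 * b / (a ^ 2 - b ^ 2)).
Proof.
intros Hab. unfold log_ratio. auto_derive.
- repeat split; try lra. apply Rdiv_lt_0_compat; lra.
- field. repeat split; nra.
Qed.

Lemma is_derive_log_ratio_r a b : 0 <= b < a ->
  is_derive (fun b => log_ratio a b) b (2 * a / (a ^ 2 - b ^ 2)).
Proof.
intros Hab. unfold log_ratio. auto_derive.
- repeat split; try lra. apply Rdiv_lt_0_compat; lra.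
- field. repeat split; nra.
Qed.

Lemma is_derive_mul_pow_fact (P L : R -> R) j x dP dL :
  is_derive P x dP -> is_derive L x dL ->
  is_derive (fun t => P t * pow_fact j (L t)) x
    (dP * pow_fact j (L x) + P x * (pow_fact_pred j (L x) * dL)).
Proof.
intros HP HL. apply (is_derive_Rmult P (fun t => pow_fact j (L t))); [exact HP|].
rewrite (Rmult_comm (pow_fact_pred j (L x))).
exact (is_derive_comp (pow_fact j) L x _ _ (is_derive_pow_fact j (L x)) HL).
Qed.

Section PartialDerivatives.
Variables (lam : R) (n : nat).

Lemma F_pred_l j a b : b < a ->
  lam * F lam (Z.of_nat n - 1) (Z.of_nat j) a b
  = Fcoef lam n * INR n * INR (S n) * a ^ pred n * b ^ pred n * (a - b)
    * pow_fact j (log_ratio a b).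
Proof.
intros Hab. destruct n as [|m].
- rewrite F_neg_l by lia. simpl. ring.
- replace (Z.of_nat (S m) - 1)%Z with (Z.of_nat m) by lia. rewrite F_of_nat by exact Hab.
  unfold Fcoef. simpl pred. rewrite (fact_simpl (S m)), (fact_simpl m), !mult_INR.
  assert (INR (fact m) <> 0) by apply INR_fact_neq_0.
  assert (INR (S m) <> 0) by (apply not_0_INR; lia).
  assert (INR (S (S m)) <> 0) by (apply not_0_INR; lia).
  simpl pow. field. auto.
Qed.

Lemma F_pred_r j a b : b < a ->
  F lam (Z.of_nat n) (Z.of_nat j - 1) a b
  = Fcoef lam n * a ^ n * b ^ n * (a - b) * pow_fact_pred j (log_ratio a b).
Proof.
intros Hab. destruct j as [|j].
- rewrite F_neg_r by lia. simpl. ring.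
- replace (Z.of_nat (S j) - 1)%Z with (Z.of_nat j) by lia. now rewrite F_of_nat.
Qed.

Definition dF_da (i : nat) (a b : R) : R :=
  Fcoef lam n * (INR n * a ^ pred n * b ^ n * (a - b) + a ^ n * b ^ n)
    * pow_fact (S i) (log_ratio a b)
  + -2 * Fcoef lam n * a ^ n * b ^ S n / (a + b) * pow_fact i (log_ratio a b).

Lemma is_derive_F_l i a b : 0 <= b < a ->
  is_derive (fun a => F lam (Z.of_nat n) (Z.of_nat (S i)) a b) a (dF_da i a b).
Proof.
intros Hab.
apply (is_derive_ext_gt
  (fun a => Fcoef lam n * (a ^ n * b ^ n * (a - b)) * pow_fact (S i) (log_ratio a b)) _ b).
{ lra. }
{ intros y Hy. rewrite F_of_nat by exact Hy. ring. }
assert (HP : is_derive (fun a => Fcoef lam n * (a ^ n * b ^ n * (a - b))) a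
  (Fcoef lam n * (INR n * a ^ pred n * b ^ n * (a - b) + a ^ n * b ^ n)))
  by (auto_derive; [exact I | ring]).
apply (is_derive_replace _ _ _ _
  (is_derive_mul_pow_fact _ _ (S i) a _ _ HP (is_derive_log_ratio_l a b Hab))).
unfold dF_da. simpl pow_fact_pred. simpl pow. field. split; nra.
Qed.

Lemma is_derive_dF_da_r i a b : 0 <= b < a ->
  is_derive (fun b => dF_da i a b) b
    (lam * F lam (Z.of_nat n - 1) (Z.of_nat (S i)) a b
     + 4 * a * b / (a ^ 2 - b ^ 2) ^ 2
       * (F lam (Z.of_nat n) (Z.of_nat (S i) - 1) a b - F lam (Z.of_nat n) (Z.of_nat i - 1) a b)).
Proof.
intros Hab. unfold dF_da.
assert (HP : is_derive
  (fun b => Fcoef lam n * (INR n * a ^ pred n * b ^ n * (a - b) + a ^ n * b ^ n)) b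
  (Fcoef lam n * (INR n * a ^ pred n * (INR n * b ^ pred n * (a - b) - b ^ n)
                  + a ^ n * INR n * b ^ pred n))).
{ auto_derive; [exact I | ring]. }
assert (HQ : is_derive (fun b => -2 * Fcoef lam n * a ^ n * b ^ S n / (a + b)) b
  (-2 * Fcoef lam n * a ^ n * ((INR n + 1) * b ^ n * (a + b) - b ^ S n) / (a + b) ^ 2)).
{ auto_derive; [lra|]. destruct n; rewrite ?INR_0; simpl pow; field; lra. }
apply (is_derive_replace _ _ _ _ (is_derive_Rplus _ _ _ _ _
  (is_derive_mul_pow_fact _ _ (S i) b _ _ HP (is_derive_log_ratio_r a b Hab))
  (is_derive_mul_pow_fact _ _ i b _ _ HQ (is_derive_log_ratio_r a b Hab)))).
rewrite F_pred_l, !F_pred_r by lra. simpl pow_fact_pred.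
destruct n; simpl pred; simpl INR; simpl pow; field; repeat split; nra.
Qed.

End PartialDerivatives.

Definition dU_da (lam : R) (n k : nat) (a b : R) : R :=
  sum_f_R0 (fun i => dF_da lam n i a b) (pred k).

Definition kernel1 (lam : R) (n k : nat) (eta s : R) : R :=
  lam * sumF lam (Z.of_nat n - 1) k eta s.

Definition kernel2 (lam : R) (n k : nat) (eta s : R) : R :=
  eta * s / (eta ^ 2 - s ^ 2) ^ 2 * F lam (Z.of_nat n) (Z.of_nat k - 1) eta s.

Lemma is_derive_sumF_l lam n k a b : 0 <= b < a ->
  is_derive (fun a => sumF lam (Z.of_nat n) k a b) a (dU_da lam n k a b).
Proof.
intros Hab. apply is_derive_sum_f_R0. intros i _. now apply is_derive_F_l.
Qed.

Lemma is_derive_dU_da_r lam n k a b : (1 <= k)%nat -> 0 <= b < a ->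
  is_derive (fun b => dU_da lam n k a b) b (kernel1 lam n k a b + 4 * kernel2 lam n k a b).
Proof.
intros Hk Hab.
apply (is_derive_replace _ _ _ _
  (is_derive_sum_f_R0 (fun i b => dF_da lam n i a b) _ b (pred k)
    (fun i _ => is_derive_dF_da_r lam n i a b Hab))).
rewrite (sum_f_R0_telescope _ (fun i => F lam (Z.of_nat n) (Z.of_nat i - 1) a b)),
  (F_neg_r _ _ (Z.of_nat 0 - 1)) by lia.
replace (S (pred k)) with k by lia.
unfold kernel1, kernel2, sumF. unfold Rdiv. ring.
Qed.

Lemma dU_da_0 lam n k a : 0 < a -> dU_da lam n k a 0 = 0.
Proof.
intros Ha.
assert (Hi : forall i, dF_da lam n i a 0 = 0).
{ intros i. unfold dF_da. rewrite log_ratio_0_r by exact Ha.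
  unfold pow_fact. simpl pow. unfold Rdiv. ring. }
unfold dU_da. induction (pred k) as [|N IH]; cbn [sum_f_R0]; rewrite ?IH, Hi; ring.
Qed.

(** * Continuity up to the diagonal *)

(* Since L := log_ratio 1 y satisfies exp L = (1 + y) / (1 - y),
   the factor 1 - y absorbs L ^ (2 j). *)
Lemma sq_mul_log_ratio_pow_le j y : 0 <= y < 1 ->
  ((1 - y) * log_ratio 1 y ^ j) ^ 2 <= 2 * INR (fact (2 * j)) * (1 - y).
Proof.
intros Hy. set (L := log_ratio 1 y).
assert (HexpL : exp L = (1 + y) / (1 - y)).
{ apply exp_ln. apply Rdiv_lt_0_compat; lra. }
assert (HL : 0 <= L).
{ rewrite <- ln_1. apply ln_le; [lra|].
  apply (Rmult_le_reg_r (1 - y)); [lra|]. field_simplify; lra. }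
assert (Hpow := pow_le_fact_mul_exp (2 * j) L HL). rewrite HexpL in Hpow.
assert (Hf := pos_INR (fact (2 * j))).
rewrite Rpow_mult_distr, <- pow_mult, Nat.mul_comm.
apply Rle_trans with ((1 - y) ^ 2 * (INR (fact (2 * j)) * ((1 + y) / (1 - y)))).
- apply Rmult_le_compat_l; [nra | exact Hpow].
- replace ((1 - y) ^ 2 * (INR (fact (2 * j)) * ((1 + y) / (1 - y))))
    with (INR (fact (2 * j)) * (1 + y) * (1 - y)) by (field; lra).
  apply Rmult_le_compat_r; nra.
Qed.

Lemma sq_F_one_le lam m i y : 0 <= y < 1 ->
  F lam (Z.of_nat m) (Z.of_nat i) 1 y ^ 2
  <= (Fcoef lam m / INR (fact i)) ^ 2 * (2 * INR (fact (2 * i))) * (1 - y).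
Proof.
intros Hy. rewrite F_of_nat, pow1 by lra.
replace ((Fcoef lam m * 1 * y ^ m * (1 - y) * pow_fact i (log_ratio 1 y)) ^ 2)
  with ((Fcoef lam m / INR (fact i)) ^ 2 * (y ^ m) ^ 2 * ((1 - y) * log_ratio 1 y ^ i) ^ 2)
  by (unfold pow_fact; field; apply INR_fact_neq_0).
assert (Hym : 0 <= (y ^ m) ^ 2 <= 1).
{ assert (0 <= y ^ m <= 1); [|nra].
  split; [apply pow_le; lra | rewrite <- (pow1 m); apply pow_incr; lra]. }
assert (HA := pow2_ge_0 (Fcoef lam m / INR (fact i))).
apply Rle_trans
  with ((Fcoef lam m / INR (fact i)) ^ 2 * 1 * (2 * INR (fact (2 * i)) * (1 - y))).
- apply Rmult_le_compat; [nra | apply pow2_ge_0 | apply Rmult_le_compat_l; lra |].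
  now apply sq_mul_log_ratio_pow_le.
- right. ring.
Qed.

Lemma F_one_continuous lam p j t : -1 < t -> continuous (fun t => F lam p j 1 t) t.
Proof.
intros Ht.
destruct (Z_lt_le_dec p 0) as [Hp|Hp].
{ apply (continuous_ext (fun _ => 0)); [intro; now rewrite F_neg_l | apply continuous_const]. }
destruct (Z_lt_le_dec j 0) as [Hj|Hj].
{ apply (continuous_ext (fun _ => 0)); [intro; now rewrite F_neg_r | apply continuous_const]. }
destruct (Z_of_nat_complete _ Hp) as [m ->], (Z_of_nat_complete _ Hj) as [i ->].
destruct (Rlt_le_dec t 1) as [H1|[H1|<-]].
- apply (continuous_ext_loc _
    (fun s => Fcoef lam m * 1 ^ m * s ^ m * (1 - s) * pow_fact i (log_ratio 1 s))).
  { apply (filter_imp (fun s => s < 1)); [|now apply open_lt].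
    intros s Hs. now rewrite F_of_nat. }
  apply continuous_of_ex_derive. unfold pow_fact, log_ratio. auto_derive.
  repeat split; try lra. apply Rdiv_lt_0_compat; lra.
- apply (continuous_ext_loc _ (fun _ => 0)); [|apply continuous_const].
  apply (filter_imp (fun s => 1 < s)); [|now apply open_gt].
  intros s Hs. symmetry. apply F_not_lt. lra.
- set (M := (Fcoef lam m / INR (fact i)) ^ 2 * (2 * INR (fact (2 * i)))).
  assert (HM : 0 <= M).
  { unfold M. apply Rmult_le_pos; [nra|]. assert (H := pos_INR (fact (2 * i))). lra. }
  apply (continuous_of_sq_le _ 1 M 1); [lra | apply F_not_lt; lra|].
  intros y Hy. apply Rabs_def2 in Hy. destruct (Rlt_le_dec y 1) as [Hy1|Hy1].
  + rewrite Rabs_left by lra. replace (- (y - 1)) with (1 - y) by ring.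
    apply sq_F_one_le; lra.
  + rewrite F_not_lt by lra. simpl. rewrite Rmult_0_l.
    apply Rmult_le_pos; [exact HM | apply Rabs_pos].
Qed.

Lemma continuous_F_r lam p j a b : 0 < a -> - a < b ->
  continuous (fun b => F lam p j a b) b.
Proof.
intros Ha Hb.
apply (continuous_ext (fun b => a ^ (2 * Z.to_nat p + 1) * F lam p j 1 (b / a))).
{ intros y. symmetry. now apply F_scale. }
apply continuous_Rmult; [apply continuous_const|].
apply (continuous_Rcomp (fun b => b / a) (fun t => F lam p j 1 t)).
- apply continuous_of_ex_derive. auto_derive. lra.
- apply F_one_continuous. apply (Rmult_lt_reg_r a); [exact Ha|]. field_simplify; lra.
Qed.

Lemma continuous_sumF_r lam p k a b : 0 < a -> - a < b ->
  continuous (fun b => sumF lam p k a b) b.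
Proof.
intros Ha Hb. apply (continuous_sum_f_R0 (fun i b => F lam p (Z.of_nat (S i)) a b)).
intros i. now apply continuous_F_r.
Qed.

Lemma continuous_sumF_l lam p k a b : 0 < a -> - a < b ->
  continuous (fun a => sumF lam p k a b) a.
Proof.
intros Ha Hb.
apply (continuous_ext_loc _ (fun a => a ^ (2 * Z.to_nat p + 1) * sumF lam p k 1 (b / a))).
{ apply (filter_imp (fun a => 0 < a)); [|now apply open_gt].
  intros y Hy. now rewrite <- sumF_scale. }
apply continuous_Rmult; [apply continuous_of_ex_derive; auto_derive; exact I|].
apply (continuous_Rcomp (fun a => b / a) (fun t => sumF lam p k 1 t)).
- apply continuous_of_ex_derive. auto_derive. lra.
- apply continuous_sumF_r; [lra|]. apply (Rmult_lt_reg_r a); [exact Ha|]. field_simplify; lra.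
Qed.

Lemma continuous_kernel1 lam n k eta s : 0 < eta -> - eta < s ->
  continuous (kernel1 lam n k eta) s.
Proof.
intros He Hs. apply continuous_Rmult; [apply continuous_const|]. now apply continuous_sumF_r.
Qed.

Lemma continuous_kernel1_one lam n k t : -1 < t -> continuous (kernel1 lam n k 1) t.
Proof. intros Ht. apply continuous_kernel1; lra. Qed.

Lemma continuous_kernel2 lam n k eta s : 0 <= s < eta ->
  continuous (kernel2 lam n k eta) s.
Proof.
intros Hs. apply continuous_Rmult.
- apply continuous_of_ex_derive. auto_derive.
  assert (eta * eta - s * s > 0) by nra. rewrite !Rmult_1_r.
  apply Rmult_integral_contrapositive; split; lra.
- apply continuous_F_r; lra.
Qed.

Lemma continuous_dU_da lam n k a b : 0 <= b < a ->
  continuous (fun a => dU_da lam n k a b) a.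
Proof.
intros Hab. apply (continuous_sum_f_R0 (fun i a => dF_da lam n i a b)). intros i.
apply continuous_of_ex_derive. unfold dF_da, pow_fact, log_ratio. auto_derive.
repeat split; try lra; apply Rdiv_lt_0_compat; lra.
Qed.

(** * The double integrals *)

Definition inner1 (lam : R) (n k : nat) (beta eta : R) : R :=
  eta ^ (2 * Z.to_nat (Z.of_nat n - 1) + 2) * RInt (kernel1 lam n k 1) 0 (beta / eta).

Lemma RInt_kernel1 lam n k beta eta : 0 < eta -> 0 <= beta ->
  RInt (kernel1 lam n k eta) 0 beta = inner1 lam n k beta eta.
Proof.
intros He Hb. apply is_RInt_unique. unfold inner1.
apply (is_RInt_Rext (fun s => eta ^ (2 * Z.to_nat (Z.of_nat n - 1) + 2)
                              * scal (/ eta) (kernel1 lam n k 1 (/ eta * s + 0)))).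
{ intros s _. change (scal (/ eta) (kernel1 lam n k 1 (/ eta * s + 0)))
    with (/ eta * kernel1 lam n k 1 (/ eta * s + 0)).
  unfold kernel1. rewrite (sumF_scale _ _ _ eta) by exact He.
  replace (s / eta) with (/ eta * s + 0) by (field; lra).
  replace (2 * Z.to_nat (Z.of_nat n - 1) + 2)%nat
    with (S (2 * Z.to_nat (Z.of_nat n - 1) + 1)) by lia.
  rewrite <- tech_pow_Rmult. field. lra. }
assert (H : is_RInt (kernel1 lam n k 1) (/ eta * 0 + 0) (/ eta * beta + 0)
              (RInt (kernel1 lam n k 1) 0 (beta / eta))).
{ replace (/ eta * 0 + 0) with 0 by ring.
  replace (/ eta * beta + 0) with (beta / eta) by (field; lra).
  apply (RInt_correct (V := R_CompleteNormedModule)).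
  apply (ex_RInt_continuous_gt _ (-1)); [apply continuous_kernel1_one | lra |].
  apply Rlt_le_trans with 0; [lra|]. apply Rmult_le_pos; [lra|].
  now apply Rlt_le, Rinv_0_lt_compat. }
apply is_RInt_comp_lin in H.
exact (is_RInt_Rscal _ _ _ (eta ^ (2 * Z.to_nat (Z.of_nat n - 1) + 2)) _ H).
Qed.

Lemma continuous_inner1 lam n k beta eta : 0 <= beta -> 0 < eta ->
  continuous (inner1 lam n k beta) eta.
Proof.
intros Hb He. apply continuous_Rmult; [apply continuous_of_ex_derive; auto_derive; exact I|].
apply (continuous_Rcomp (fun eta => beta / eta) (fun s => RInt (kernel1 lam n k 1) 0 s)).
- apply continuous_of_ex_derive. auto_derive. lra.
- apply (continuous_RInt_upper _ (-1)); [apply continuous_kernel1_one | lra |].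
  apply Rlt_le_trans with 0; [lra|]. apply Rmult_le_pos; [lra|].
  now apply Rlt_le, Rinv_0_lt_compat.
Qed.

Lemma is_RInt_kernels lam n k beta eta : (1 <= k)%nat -> 0 <= beta < eta ->
  is_RInt (fun s => kernel1 lam n k eta s + 4 * kernel2 lam n k eta s) 0 beta
    (dU_da lam n k eta beta).
Proof.
intros Hk Hb.
replace (dU_da lam n k eta beta) with (dU_da lam n k eta beta - dU_da lam n k eta 0)
  by (rewrite dU_da_0 by lra; ring).
apply (is_RInt_Rderive (fun s => dU_da lam n k eta s));
  intros s Hs; rewrite Rmin_left, Rmax_right in Hs by lra.
- apply is_derive_dU_da_r; [exact Hk | lra].
- apply continuous_Rplus; [apply continuous_kernel1; lra|].
  apply continuous_Rmult; [apply continuous_const | apply continuous_kernel2; lra].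
Qed.

Lemma RInt_kernel2 lam n k beta eta : (1 <= k)%nat -> 0 <= beta < eta ->
  RInt (kernel2 lam n k eta) 0 beta = / 4 * (dU_da lam n k eta beta - inner1 lam n k beta eta).
Proof.
intros Hk Hb.
assert (H1 : ex_RInt (kernel1 lam n k eta) 0 beta).
{ apply (ex_RInt_continuous_gt _ (- eta)); [intros; apply continuous_kernel1 | |]; lra. }
assert (H2 : ex_RInt (kernel2 lam n k eta) 0 beta).
{ apply (ex_RInt_continuous (V := R_CompleteNormedModule)). intros s Hs.
  rewrite Rmin_left, Rmax_right in Hs by lra. apply continuous_kernel2; lra. }
assert (Hsum := is_RInt_Rplus _ _ _ _ _ _ (RInt_correct _ _ _ H1)
  (is_RInt_Rscal _ _ _ 4 _ (RInt_correct _ _ _ H2))).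
assert (E := is_RInt_unique _ _ _ _ Hsum).
cbv beta in E. rewrite (is_RInt_unique _ _ _ _ (is_RInt_kernels lam n k beta eta Hk Hb)),
  RInt_kernel1 in E by lra.
lra.
Qed.

Lemma double_int_kernel1 lam n k alpha beta : 0 < beta < alpha ->
  double_int (kernel1 lam n k) beta alpha (RInt (inner1 lam n k beta) beta alpha).
Proof.
intros Hb.
exists (fun eta => RInt (kernel1 lam n k eta) 0 beta). split.
- intros eta He. apply RInt_eq_of_is_RInt, (RInt_correct (V := R_CompleteNormedModule)).
  apply (ex_RInt_continuous_gt _ (- eta)); [intros; apply continuous_kernel1 | |]; lra.
- apply (improper_lower_of_continuous _ (fun c => RInt (inner1 lam n k beta) c alpha));
    [lra | |].
  + intros c Hc. apply RInt_eq_of_is_RInt.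
    apply (is_RInt_Rext (inner1 lam n k beta)).
    { intros eta He. rewrite Rmin_left, Rmax_right in He by lra.
      symmetry. apply RInt_kernel1; lra. }
    apply (RInt_correct (V := R_CompleteNormedModule)).
    apply (ex_RInt_continuous_gt _ 0); [intros; apply continuous_inner1 | |]; lra.
  + apply (continuous_RInt_lower _ 0); [intros; apply continuous_inner1 | |]; lra.
Qed.

Lemma double_int_kernel2 lam n k alpha beta : (1 <= k)%nat -> 0 < beta < alpha ->
  double_int (kernel2 lam n k) beta alpha
    (/ 4 * (sumF lam (Z.of_nat n) k alpha beta - RInt (inner1 lam n k beta) beta alpha)).
Proof.
intros Hk Hb.
exists (fun eta => RInt (kernel2 lam n k eta) 0 beta). split.
- intros eta He. apply RInt_eq_of_is_RInt, (RInt_correct (V := R_CompleteNormedModule)).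
  apply (ex_RInt_continuous (V := R_CompleteNormedModule)). intros s Hs.
  rewrite Rmin_left, Rmax_right in Hs by lra. apply continuous_kernel2; lra.
- set (W := fun c => / 4 * (sumF lam (Z.of_nat n) k alpha beta - sumF lam (Z.of_nat n) k c beta
                            - RInt (inner1 lam n k beta) c alpha)).
  replace (/ 4 * _) with (W beta) by (unfold W; rewrite sumF_diag; ring).
  apply improper_lower_of_continuous; [lra | |].
  + intros c Hc. apply RInt_eq_of_is_RInt. unfold W.
    apply (is_RInt_Rext (fun eta => / 4 * (dU_da lam n k eta beta - inner1 lam n k beta eta))).
    { intros eta He. rewrite Rmin_left, Rmax_right in He by lra.
      symmetry. apply RInt_kernel2; [exact Hk | lra]. }
    apply is_RInt_Rscal, is_RInt_Rminus.
    * apply (is_RInt_Rderive (fun c => sumF lam (Z.of_nat n) k c beta));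
        intros eta He; rewrite Rmin_left, Rmax_right in He by lra.
      -- apply is_derive_sumF_l; lra.
      -- apply continuous_dU_da; lra.
    * apply (RInt_correct (V := R_CompleteNormedModule)).
      apply (ex_RInt_continuous_gt _ 0); [intros; apply continuous_inner1 | |]; lra.
  + unfold W. apply continuous_Rmult; [apply continuous_const|].
    apply continuous_Rminus; [apply continuous_Rminus; [apply continuous_const|]|].
    * apply continuous_sumF_l; lra.
    * apply (continuous_RInt_lower _ 0); [intros; apply continuous_inner1 | |]; lra.
Qed.

Theorem lemma2 (lam : R) (n k : nat) (alpha beta : R) :
  0 <= lam -> (1 <= k)%nat -> 0 <= beta -> beta <= alpha ->
  exists I1 I2 : R,
    double_int (fun eta sigma => lam * sumF lam (Z.of_nat n - 1) k eta sigma)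
      beta alpha I1 /\
    double_int (fun eta sigma =>
        eta * sigma / (eta ^ 2 - sigma ^ 2) ^ 2
        * F lam (Z.of_nat n) (Z.of_nat k - 1) eta sigma)
      beta alpha I2 /\
    sumF lam (Z.of_nat n) k alpha beta = I1 + 4 * I2.
Proof.
intros _ Hk Hb Hba.
destruct (Req_dec beta alpha) as [<- | Hne].
{ exists 0, 0. split; [|split]; try (apply double_int_degenerate; auto; lra).
  rewrite sumF_diag. ring. }
destruct (Req_dec beta 0) as [-> | Hb0].
{ exists 0, 0. split; [|split]; try (apply double_int_degenerate; auto; lra).
  rewrite sumF_0_r by lra. ring. }
exists (RInt (inner1 lam n k beta) beta alpha),
  (/ 4 * (sumF lam (Z.of_nat n) k alpha beta - RInt (inner1 lam n k beta) beta alpha)).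
split; [|split].
- apply double_int_kernel1. lra.
- apply double_int_kernel2; [exact Hk | lra].
- field.
Qed.
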